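(* Let $n\geq 1$ be an integer, let $\mathbb{D}:=\{z\in\mathbb{C}:|z|<1\}$ and $\mathbb{B}_n:=\{(z_1,\dots,z_n)\in\mathbb{C}^n: |z_1|^2+\cdots+|z_n|^2<1\}$, and let $X$ denote either $\mathbb{D}^n$ or $\mathbb{B}_n$. Let $R_n$ be a commutative unital subring of the ring $\mathbb{C}^{X}$ of all complex-valued functions on $X$, with the usual pointwise addition and multiplication. For $f\in R_n$ define the function $Df:\mathbb{D}\to\mathbb{C}$ by $(Df)(z_1):=f(z_1,0,\dots,0)$, and set $DR_n:=\{Df: f\in R_n\}$ (a ring of functions on $\mathbb{D}$ under pointwise operations). For $g\in DR_n$ define $Ug:X\to\mathbb{C}$ by $(Ug)(z_1,\dots,z_n):=g(z_1)$. Suppose that $UDf\in R_n$ for all $f\in R_n$. If $R_n$ is coherent, then $DR_n$ is coherent.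
   Context: A unital commutative ring $R$ is called coherent if the intersection of any two finitely generated ideals of $R$ is finitely generated, and for every $a\in R$ the annihilator $\mathrm{Ann}(a):=\{x\in R: ax=0\}$ is a finitely generated ideal. *)

From HB Require Import structures.
From mathcomp Require Import all_boot all_order all_algebra.
From mathcomp Require Import complex Rstruct.
From Stdlib Require Import Rdefinitions.
Set Implicit Arguments. Unset Strict Implicit. Unset Printing Implicit Defensive.
Import Order.TTheory GRing.Theory Num.Theory.
Local Open Scope ring_scope.

Definition C : numClosedFieldType := (Rdefinitions.R)[i].

Definition is_subring (T : Type) (S : (T -> C) -> Prop) : Prop :=
  S (fun _ => 1) /\
  (forall f g, S f -> S g -> S (fun t => f t - g t)) /\
  (forall f g, S f -> S g -> S (fun t => f t * g t)).

Definition in_ideal_gen (T : Type) (S : (T -> C) -> Prop) (k : nat)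
    (g : 'I_k -> T -> C) (h : T -> C) : Prop :=
  exists c : 'I_k -> T -> C, (forall i, S (c i)) /\
    forall t, h t = \sum_(i < k) c i t * g i t.

Definition fg_ideal (T : Type) (S : (T -> C) -> Prop) (I : (T -> C) -> Prop)
  : Prop :=
  exists (k : nat) (g : 'I_k -> T -> C), (forall i, S (g i)) /\
    forall h, I h <-> in_ideal_gen S g h.

Definition ann (T : Type) (S : (T -> C) -> Prop) (a : T -> C) : (T -> C) -> Prop :=
  fun x => S x /\ forall t, a t * x t = 0.

Definition coherent (T : Type) (S : (T -> C) -> Prop) : Prop :=
  (forall I J, fg_ideal S I -> fg_ideal S J ->
     fg_ideal S (fun h => I h /\ J h)) /\
  (forall a, S a -> fg_ideal S (ann S a)).

Inductive domain := Polydisc | Ball.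

Definition inX (d : domain) (n : nat) (z : 'I_n.+1 -> C) : bool :=
  match d with
  | Polydisc => [forall i, `|z i| < 1]
  | Ball => \sum_(i < n.+1) `|z i| ^+ 2 < 1
  end.

Definition ptX (d : domain) (n : nat) := {z : 'I_n.+1 -> C | inX d z}.
Definition ptD := {z : C | `|z| < 1}.

Definition e1 (n : nat) (z : C) : 'I_n.+1 -> C :=
  fun i => if i == ord0 then z else 0.

Lemma e1_in (d : domain) (n : nat) (z : ptD) : inX d (@e1 n (val z)).
Proof.
case: z => z /= hz; case: d => /=.
  apply/forallP => i; rewrite /e1; case: (i == ord0) => //.
  by rewrite normr0 ltr01.
rewrite big_ord_recl /e1 eqxx big1 ?addr0; last first.
  by move=> i _; rewrite eq_sym (negbTE (neq_lift _ _)) normr0 expr0n.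
by rewrite expr_lt1 // normr_ge0.
Qed.

Lemma proj_in (d : domain) (n : nat) (x : ptX d n) : `|val x ord0| < 1.
Proof.
case: x => x /=; case: d => /=.
  by move/forallP/(_ ord0).
move=> hx; have h0 : `|x ord0| ^+ 2 < 1.
  apply: le_lt_trans hx; rewrite big_ord_recl lerDl.
  by apply: sumr_ge0 => i _; rewrite exprn_ge0.
by move: h0; rewrite expr_lt1 // normr_ge0.
Qed.

Definition embD (d : domain) (n : nat) (z : ptD) : ptX d n :=
  exist _ (@e1 n (val z)) (e1_in d n z).

Definition projD (d : domain) (n : nat) (x : ptX d n) : ptD :=
  exist _ (val x ord0) (proj_in x).

Definition Dop (d : domain) (n : nat) (f : ptX d n -> C) : ptD -> C :=
  fun z => f (embD d n z).

Definition Uop (d : domain) (n : nat) (g : ptD -> C) : ptX d n -> C :=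
  fun x => g (projD x).

Definition DR (d : domain) (n : nat) (Rn : (ptX d n -> C) -> Prop)
  : (ptD -> C) -> Prop :=
  fun g => exists f, Rn f /\ g = Dop f.

(* D R_n is a retract of R_n: the ring maps U : D R_n -> R_n and D : R_n -> D R_n,
   given by precomposition with the projection to the first coordinate and with
   the embedding z1 |-> (z1, 0, ..., 0), satisfy D o U = id.  A retract of a
   coherent ring is coherent: ideals of D R_n are pulled back along the
   projection, generators of intersections and annihilators computed in R_n are
   pushed forward along the embedding, and D o U = id lets memberships travel
   back. *)
From HB Require Import structures.
From mathcomp Require Import all_boot all_order all_algebra.
From Stdlib Require Import FunctionalExtensionality.
Set Implicit Arguments. Unset Strict Implicit. Unset Printing Implicit Defensive.
Import Order.TTheory GRing.Theory Num.Theory.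
Local Open Scope ring_scope.

Lemma fun_sum_closed (T : Type) (P : (T -> C) -> Prop) k (F : 'I_k -> T -> C) :
  P (fun _ => 0) -> (forall f g, P f -> P g -> P (fun t => f t + g t)) ->
  (forall i, P (F i)) -> P (fun t => \sum_(i < k) F i t).
Proof.
move=> P0 PD; elim: k F => [|k IHk] F PF.
  by have -> : (fun t => \sum_(i < 0) F i t) = (fun=> 0)
    by apply: functional_extensionality => t; rewrite big_ord0.
have -> : (fun t => \sum_(i < k.+1) F i t) =
    (fun t => F ord0 t + \sum_(i < k) F (lift ord0 i) t).
  by apply: functional_extensionality => t; rewrite big_ord_recl.
by apply: PD => //; apply: IHk.
Qed.

Section SubringIdeal.
Variables (T : Type) (S : (T -> C) -> Prop).
Hypothesis subS : is_subring S.

Lemma subring0 : S (fun _ => 0).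
Proof.
have [S1 [SB _]] := subS.
have -> : (fun _ : T => 0) = (fun _ => 1 - 1) :> (T -> C) by rewrite subrr.
exact: SB.
Qed.

Lemma subringD f g : S f -> S g -> S (fun t => f t + g t).
Proof.
move=> Sf Sg; have [_ [SB _]] := subS.
have -> : (fun t => f t + g t) = (fun t => f t - (0 - g t)).
  by apply: functional_extensionality => t; rewrite sub0r opprK.
exact: (SB _ _ Sf (SB _ _ subring0 Sg)).
Qed.

Variables (k : nat) (g : 'I_k -> T -> C).

Lemma in_ideal_gen0 : in_ideal_gen S g (fun _ => 0).
Proof.
exists (fun _ _ => 0); split=> [|t]; first by move=> _; exact: subring0.
by rewrite big1 // => i _; rewrite mul0r.
Qed.

Lemma in_ideal_genD h1 h2 :
  in_ideal_gen S g h1 -> in_ideal_gen S g h2 ->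
  in_ideal_gen S g (fun t => h1 t + h2 t).
Proof.
move=> [c1 [Sc1 E1]] [c2 [Sc2 E2]].
exists (fun i t => c1 i t + c2 i t); split=> [i|t]; first exact: subringD.
by rewrite E1 E2 -big_split; apply: eq_bigr => i _; rewrite mulrDl.
Qed.

Lemma in_ideal_genM a h :
  S a -> in_ideal_gen S g h -> in_ideal_gen S g (fun t => a t * h t).
Proof.
move=> Sa [c [Sc E]]; have [_ [_ SM]] := subS.
exists (fun i t => a t * c i t); split=> [i|t]; first exact: SM.
by rewrite E mulr_sumr; apply: eq_bigr => i _; rewrite mulrA.
Qed.

Lemma in_ideal_gen_comb m (c hs : 'I_m -> T -> C) :
  (forall l, S (c l)) -> (forall l, in_ideal_gen S g (hs l)) ->
  in_ideal_gen S g (fun t => \sum_(l < m) c l t * hs l t).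
Proof.
move=> Sc Ihs; apply: (fun_sum_closed (P := in_ideal_gen S g)).
- exact: in_ideal_gen0.
- exact: in_ideal_genD.
- by move=> l; exact: in_ideal_genM.
Qed.

Lemma in_ideal_gen_gen l : in_ideal_gen S g (g l).
Proof.
have [S1 _] := subS.
exists (fun i _ => (i == l)%:R); split=> [i|t].
  by case: (i == l); [exact: S1 | exact: subring0].
rewrite (bigD1 l) // eqxx mul1r big1 /= ?addr0 // => i /negbTE ->.
by rewrite mul0r.
Qed.

Lemma in_ideal_gen_sub h : (forall i, S (g i)) -> in_ideal_gen S g h -> S h.
Proof.
move=> Sg [c [Sc E]]; have [_ [_ SM]] := subS.
rewrite (functional_extensionality _ _ E).
apply: (fun_sum_closed (P := S)) => [|f1 f2|i]; [exact: subring0 | exact: subringD |].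
exact: SM.
Qed.

End SubringIdeal.

Lemma in_ideal_gen_comp (T T' : Type) (S : (T -> C) -> Prop)
    (S' : (T' -> C) -> Prop) (m : T' -> T) k (g : 'I_k -> T -> C) h
    (g' : 'I_k -> T' -> C) (h' : T' -> C) :
  (forall f, S f -> S' (fun t => f (m t))) ->
  (forall i t, g' i t = g i (m t)) -> (forall t, h' t = h (m t)) ->
  in_ideal_gen S g h -> in_ideal_gen S' g' h'.
Proof.
move=> Sm Eg Eh [c [Sc E]]; exists (fun i t => c i (m t)); split=> [i|t].
  exact: Sm.
by rewrite Eh E; apply: eq_bigr => i _; rewrite Eg.
Qed.

Section Retract.
Variables (T T' : Type) (S : (T -> C) -> Prop) (S' : (T' -> C) -> Prop).
Variables (e : T' -> T) (p : T -> T').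
Hypothesis epK : cancel e p.
Hypothesis subS : is_subring S.
Hypothesis S_pull : forall g, S' g -> S (fun t => g (p t)).
Hypothesis S'_push : forall f, S f -> S' (fun t => f (e t)).

Lemma in_ideal_gen_pull k (g : 'I_k -> T' -> C) h :
  in_ideal_gen S' g h -> in_ideal_gen S (fun i t => g i (p t)) (fun t => h (p t)).
Proof. exact: (in_ideal_gen_comp S_pull). Qed.

Lemma in_ideal_gen_push k (g : 'I_k -> T -> C) h :
  in_ideal_gen S g (fun t => h (p t)) -> in_ideal_gen S' (fun i t => g i (e t)) h.
Proof. by apply: (in_ideal_gen_comp S'_push) => // t; rewrite epK. Qed.

(* Elements of the ideal of S pulled back from (gI) push forward into (gI); the
   coefficients are routed through S because S' need not be closed under sums. *)
Lemma in_ideal_gen_push_trans kI (gI : 'I_kI -> T' -> C) k (g : 'I_k -> T -> C) h :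
  (forall l, in_ideal_gen S (fun i t => gI i (p t)) (g l)) ->
  in_ideal_gen S' (fun l t => g l (e t)) h -> in_ideal_gen S' gI h.
Proof.
move=> Ig [c [Sc Eh]].
have Ige l : in_ideal_gen S' gI (fun t => g l (e t)).
  by apply: (in_ideal_gen_comp S'_push _ _ (Ig l)) => // i t; rewrite epK.
apply: (in_ideal_gen_comp S'_push) (in_ideal_gen_comb subS
  (c := fun l t => c l (p t)) _ (fun l => in_ideal_gen_pull (Ige l))) => //.
- by move=> i t; rewrite epK.
- by move=> t; rewrite !epK.
- by move=> l; exact: S_pull.
Qed.

Lemma retract_fg_meet :
  (forall I J, fg_ideal S I -> fg_ideal S J -> fg_ideal S (fun h => I h /\ J h)) ->
  forall I J, fg_ideal S' I -> fg_ideal S' J -> fg_ideal S' (fun h => I h /\ J h).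
Proof.
move=> meetS I J [kI [gI [SgI defI]]] [kJ [gJ [SgJ defJ]]].
have fg_pull k (g : 'I_k -> T' -> C) : (forall i, S' (g i)) ->
    fg_ideal S (in_ideal_gen S (fun i t => g i (p t))).
  by move=> Sg; exists k, (fun i t => g i (p t)); split=> // i; exact: S_pull.
have [k [g [Sg defIJ]]] := meetS _ _ (fg_pull _ _ SgI) (fg_pull _ _ SgJ).
exists k, (fun l t => g l (e t)); split=> [l|h]; first exact: S'_push.
have Ig l := proj2 (defIJ (g l)) (in_ideal_gen_gen subS g l).
split=> [[/defI hI /defJ hJ] | Ih].
- apply: in_ideal_gen_push; apply/defIJ.
  by split; apply: in_ideal_gen_pull.
- split; [apply/defI | apply/defJ]; apply: in_ideal_gen_push_trans Ih => l.
    exact: (proj1 (Ig l)).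
  exact: (proj2 (Ig l)).
Qed.

Lemma retract_fg_ann :
  (forall a, S a -> fg_ideal S (ann S a)) ->
  forall a, S' a -> fg_ideal S' (ann S' a).
Proof.
move=> annS a S'a; have [k [g [Sg defA]]] := annS _ (S_pull S'a).
exists k, (fun l t => g l (e t)); split=> [l|h]; first exact: S'_push.
split=> [[S'h ah0] | Ih].
  by apply: in_ideal_gen_push; apply/defA; split=> [|t]; [exact: S_pull | exact: ah0].
have ag l t : a t * g l (e t) = 0.
  by have [_ /(_ (e t))] := proj2 (defA (g l)) (in_ideal_gen_gen subS g l); rewrite epK.
have [c [Sc Eh]] := Ih; split=> [|t]; last first.
  by rewrite Eh mulr_sumr big1 // => l _; rewrite mulrCA ag mulr0.
have Sf : S (fun t => \sum_(l < k) c l (p t) * g l t).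
  apply: (in_ideal_gen_sub subS Sg).
  by exists (fun l t => c l (p t)); split=> [l|t] //; exact: S_pull.
have -> : h = (fun t => \sum_(l < k) c l (p (e t)) * g l (e t)).
  by apply: functional_extensionality => t; rewrite Eh; apply: eq_bigr => l _; rewrite epK.
exact: S'_push Sf.
Qed.

Lemma coherent_retract : coherent S -> coherent S'.
Proof.
by move=> [meetS annS]; split; [exact: retract_fg_meet | exact: retract_fg_ann].
Qed.

End Retract.

Lemma projD_embD (d : domain) (n : nat) : cancel (embD d n) (@projD d n).
Proof. by move=> z; apply: val_inj; rewrite /= /e1 eqxx. Qed.

Theorem mainTheorem1 (d : domain) (n : nat) (Rn : (ptX d n -> C) -> Prop) :
  is_subring Rn ->
  (forall f, Rn f -> Rn (Uop (Dop f))) ->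
  coherent Rn ->
  coherent (DR Rn).
Proof.
move=> subRn UDRn; apply: (coherent_retract (@projD_embD d n) subRn).
- by move=> _ [f [Rnf ->]]; exact: UDRn.
- by move=> f Rnf; exists f.
Qed.
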